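(* Suppose $\widehat Z^\natural$ satisfies the average case incoherence condition with parameter $\mu_0$. Then for any two pairs $(j,k),(\alpha,\beta)\in[d]\times[n]$, $$\sqrt{\frac{w_k}{w_\beta}}\,\big|\langle\mathcal P_{\widehat T}(\widehat G_{j,k}),\widehat G_{\alpha,\beta}\rangle\big|\le\frac{3\mu_0 r}{n}.$$
   Context: Let $d\ge1$, $n$ odd, $n_1=n_2=(n+1)/2$. For $a\in[n]$, $w_a=\#\{(j,k)\in[n_1]\times[n_2]:j+k=a+1\}$, $G_a=w_a^{-1/2}\sum_{j+k=a+1}e_je_k^{\mathsf T}$. $F$ is the $d\times d$ unitary DFT matrix, $F_{ij}=d^{-1/2}e^{-2\pi\mathrm i(i-1)(j-1)/d}$. $\widehat G_{j,k}=\mathrm{diag}(F_{1j}G_k,\dots,F_{dj}G_k)$. Inner product $\langle A,B\rangle=\mathrm{tr}(AB^{\mathsf H})$. $\widehat Z^\natural=\mathrm{diag}(\widehat Z^\natural_a)$ with each block of rank $r$ and compact SVD $\widehat U_a\widehat\Sigma_a\widehat V_a^{\mathsf H}$; $\mathcal P_{\widehat T}$ acts blockwise on block diagonal matrices by $W_a\mapsto\widehat U_a\widehat U_a^{\mathsf H}W_a+W_a\widehat V_a\widehat V_a^{\mathsf H}-\widehat U_a\widehat U_a^{\mathsf H}W_a\widehat V_a\widehat V_a^{\mathsf H}$. Average case incoherence with parameter $\mu_0$: $\max_i\frac1d\sum_a\|e_i^{\mathsf T}\widehat U_a\|_2^2\le\mu_0r/n$ and $\max_j\frac1d\sum_a\|e_j^{\mathsf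 T}\widehat V_a\|_2^2\le\mu_0r/n$. *)

From HB Require Import structures.
From mathcomp Require Import all_boot all_order all_algebra.
From mathcomp Require Import algC.
Set Implicit Arguments. Unset Strict Implicit. Unset Printing Implicit Defensive.
Import Order.TTheory GRing.Theory Num.Theory.
Local Open Scope ring_scope.

Definition half_dim (n : nat) : nat := (n.+1)./2.

(* w_a (0-based a = paper's a - 1): #{(j,k) : j + k = a} with 0-based j,k
   (equivalently 1-based j + k = a + 1). *)
Definition wcount (m1 m2 a : nat) : nat :=
  #|[set p : 'I_m1 * 'I_m2 | (p.1 + p.2 == a)%N]|.

Definition Gmat (m1 m2 a : nat) : 'M[algC]_(m1, m2) :=
  \matrix_(i < m1, j < m2)
    (if (i + j == a)%N then (sqrtC (wcount m1 m2 a)%:R)^-1 else 0).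

(* e^{-2 pi i / d}: d.-root (-1) = e^{i pi / d} (minimal argument), so its
   square is e^{2 pi i/d}; take the complex conjugate. *)
Definition dft_omega (d : nat) : algC := ((d.-root (-1)) ^+ 2)^*.

(* unitary DFT matrix entry F_{ij} = d^{-1/2} e^{-2 pi i (i-1)(j-1)/d}
   (0-based indices i, j) *)
Definition dft (d : nat) (i j : 'I_d) : algC :=
  (sqrtC d%:R)^-1 * dft_omega d ^+ (i * j).

Definition adjmx (m p : nat) (A : 'M[algC]_(m, p)) : 'M[algC]_(p, m) :=
  (map_mx Num.conj A)^T.

(* A block diagonal matrix diag(W_1, ..., W_d) with n1 x n2 blocks is
   represented by its family of blocks W : 'I_d -> 'M_(n1,n2). *)

Definition Ghat (d m1 m2 : nat) (j : 'I_d) (a : nat) : 'I_d -> 'M[algC]_(m1, m2) :=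
  fun b => dft b j *: Gmat m1 m2 a.

(* <A, B> = tr(A B^H) for block diagonal matrices = sum of blockwise traces *)
Definition bdinner (d m1 m2 : nat) (A B : 'I_d -> 'M[algC]_(m1, m2)) : algC :=
  \sum_(b < d) \tr (A b *m adjmx (B b)).

Definition PT (d m1 m2 r : nat) (U : 'I_d -> 'M[algC]_(m1, r))
    (V : 'I_d -> 'M[algC]_(m2, r)) (W : 'I_d -> 'M[algC]_(m1, m2))
    : 'I_d -> 'M[algC]_(m1, m2) :=
  fun b =>
    let PU := U b *m adjmx (U b) in
    let PV := V b *m adjmx (V b) in
    PU *m W b + W b *m PV - PU *m W b *m PV.

Definition is_compact_svd (m1 m2 r : nat) (Z : 'M[algC]_(m1, m2))
    (U : 'M[algC]_(m1, r)) (S : 'M[algC]_r) (V : 'M[algC]_(m2, r)) : Prop :=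
  [/\ \rank Z = r,
      adjmx U *m U = 1%:M,
      adjmx V *m V = 1%:M
    & Z = U *m S *m adjmx V] /\
  [/\ is_diag_mx S,
      (forall i : 'I_r, 0 < S i i)
    & (forall i j : 'I_r, (i <= j)%N -> S j j <= S i i)].

Definition avg_incoherent (d n m1 m2 r : nat) (mu0 : algC)
    (U : 'I_d -> 'M[algC]_(m1, r)) (V : 'I_d -> 'M[algC]_(m2, r)) : Prop :=
  (forall i : 'I_m1,
      d%:R^-1 * (\sum_(a < d) \sum_(l < r) `|U a i l| ^+ 2) <= mu0 * r%:R / n%:R)
  /\
  (forall i : 'I_m2,
      d%:R^-1 * (\sum_(a < d) \sum_(l < r) `|V a i l| ^+ 2) <= mu0 * r%:R / n%:R).

From mathcomp Require Import all_boot all_order all_algebra.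
From mathcomp Require Import algC.
From mathcomp Require Import ring zify.
Import Order.TTheory GRing.Theory Num.Theory.
Set Implicit Arguments. Unset Strict Implicit. Unset Printing Implicit Defensive.
Local Open Scope ring_scope.

(* Writing G_k = w_k^{-1/2} J_k with J_k the indicator of the k-th antidiagonal,
   the b-th block of P_T(\hat G_{j,k}) is F_{bj} w_k^{-1/2} times
   X_b = P_U J_k + J_k P_V - P_U J_k P_V, and pairing with \hat G_{alpha,beta}
   sums the entries of X_b over the beta-th antidiagonal (w_beta entries).
   By AM-GM each entry of X_b is dominated by half-sums of the leverage scores
   |e_i^T U_b|^2 and |e_i^T V_b|^2 (for the sandwich term, because each row of
   the projection P_U has squared norm |e_a^T U_b|^2); averaging over the d
   blocks with |F_{bj}|^2 = 1/d, incoherence bounds these dominating terms by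
   3 mu0 r/n per entry, and the w_beta entries together with the two scalings
   w^{-1/2} leave the factor sqrt(w_beta/w_k) that the prefactor cancels. *)

Lemma normrM_le_mean_sqr (F : numFieldType) (x y : F) :
  `|x * y| <= (`|x| ^+ 2 + `|y| ^+ 2) / 2%:R.
Proof.
rewrite normrM ler_pdivlMr ?ltr0n // -subr_ge0.
suff -> : `|x| ^+ 2 + `|y| ^+ 2 - `|x| * `|y| * 2%:R = (`|x| - `|y|) ^+ 2.
  by rewrite -realEsqr rpredB ?normr_real.
ring.
Qed.

Lemma sum_single_le (F : numDomainType) (I : finType) (P : pred I)
    (f : I -> F) (B : F) :
  0 <= B -> (forall i j, P i -> P j -> i = j) -> (forall i, P i -> f i <= B) ->
  \sum_(i | P i) f i <= B.
Proof.
move=> B_ge0 P_single fB.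
have [i0 Pi0 | P0] := pickP P; last by rewrite big_pred0.
rewrite (bigD1 i0) //= big_pred0 ?addr0; first exact: fB.
by move=> i; apply/andP => -[Pi /eqP]; apply; apply: P_single.
Qed.

Lemma sum_mean_le (F : numFieldType) (I : Type) (s : seq I) (x y : I -> F) (B : F) :
  \sum_(i <- s) x i <= B -> \sum_(i <- s) y i <= B ->
  \sum_(i <- s) (x i + y i) / 2%:R <= B.
Proof.
move=> xB yB; rewrite -mulr_suml big_split /=.
by rewrite ler_pdivrMr ?ltr0n // mulr_natr mulr2n lerD.
Qed.

(* An equality, except when x or y vanishes and the junk value 0^-1 = 0 makes
   the left-hand side 0; this spares the positivity of the weights w_k. *)
Lemma sqrtC_ratio_le1 (C : numClosedFieldType) (x y : C) :
  0 <= x -> 0 <= y -> sqrtC (x / y) * ((sqrtC x)^-1 * (sqrtC y)^-1 * y) <= 1.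
Proof.
move=> x_ge0 y_ge0.
have [-> | x_neq0] := eqVneq x 0; first by rewrite mul0r sqrtC0 !mul0r ler01.
have [-> | y_neq0] := eqVneq y 0; first by rewrite !mulr0 ler01.
have sqrtCV z : 0 <= z -> sqrtC z^-1 = (sqrtC z)^-1.
  by move=> z_ge0; rewrite -[RHS]sqrCK ?invr_ge0 ?sqrtC_ge0 // exprVn sqrtCK.
rewrite sqrtCM ?qualifE /= ?invr_ge0 // sqrtCV //.
have sx : sqrtC x != 0 by rewrite sqrtC_eq0.
have sy : sqrtC y != 0 by rewrite sqrtC_eq0.
rewrite -{3}(sqrtCK y) le_eqVlt; apply/predU1l.
by field; apply/andP.
Qed.

Lemma adjmxE m p (A : 'M[algC]_(m, p)) i j : adjmx A i j = (A j i)^*.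
Proof. by rewrite !mxE. Qed.

Lemma adjmxK m p (A : 'M[algC]_(m, p)) : adjmx (adjmx A) = A.
Proof. by apply/matrixP => i j; rewrite !adjmxE conjCK. Qed.

Lemma adjmxZ m p c (A : 'M[algC]_(m, p)) : adjmx (c *: A) = c^* *: adjmx A.
Proof. by apply/matrixP => i j; rewrite !mxE rmorphM. Qed.

Lemma adjmxM m p q (A : 'M[algC]_(m, p)) (B : 'M[algC]_(p, q)) :
  adjmx (A *m B) = adjmx B *m adjmx A.
Proof. by rewrite /adjmx map_mxM trmx_mul. Qed.

Definition row_sqnorm m r (W : 'M[algC]_(m, r)) (i : 'I_m) : algC :=
  \sum_(l < r) `|W i l| ^+ 2.

Lemma row_sqnorm_ge0 m r (W : 'M[algC]_(m, r)) i : 0 <= row_sqnorm W i.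
Proof. by apply: sumr_ge0 => l _; rewrite exprn_ge0. Qed.

Section OrthogonalProjection.
Variables m r : nat.
Variable W : 'M[algC]_(m, r).
Local Notation P := (W *m adjmx W).

Lemma projmx_adj : adjmx P = P.
Proof. by rewrite adjmxM adjmxK. Qed.

Lemma projmx_conj i j : P j i = (P i j)^*.
Proof. by have /matrixP/(_ j i) := projmx_adj; rewrite adjmxE => ->. Qed.

Lemma norm_projmx_le i j : `|P i j| <= (row_sqnorm W i + row_sqnorm W j) / 2%:R.
Proof.
rewrite mxE; apply: le_trans (ler_norm_sum _ _ _) _.
rewrite /row_sqnorm -big_split /= mulr_suml; apply: ler_sum => l _.
by rewrite adjmxE -(norm_conjC (W j l)) normrM_le_mean_sqr.
Qed.

Hypothesis W_isometry : adjmx W *m W = 1%:M.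

Lemma projmx_row_sqnorm i : \sum_(j < m) `|P i j| ^+ 2 = row_sqnorm W i.
Proof.
have PP : P *m adjmx P = P.
  by rewrite projmx_adj mulmxA -(mulmxA W) W_isometry mulmx1.
transitivity (P i i); last first.
  by rewrite mxE; apply: eq_bigr => l _; rewrite adjmxE normCK.
by rewrite -[in RHS]PP mxE; apply: eq_bigr => j _; rewrite adjmxE normCK.
Qed.

End OrthogonalProjection.

Definition antidiag_mx m k : 'M[algC]_m :=
  \matrix_(i, j) (if (i + j == k)%N then 1 else 0).

Lemma antidiag_single_l m k (q p p' : 'I_m) :
  (p + q == k)%N -> (p' + q == k)%N -> p = p'.
Proof. by move=> /eqP ? /eqP ?; apply: val_inj => /=; lia. Qed.

Lemma antidiag_single_r m k (a p p' : 'I_m) :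
  (a + p == k)%N -> (a + p' == k)%N -> p = p'.
Proof. by move=> /eqP ? /eqP ?; apply: val_inj => /=; lia. Qed.

Lemma mulmx_antidiagE m k (A : 'M[algC]_m) a q :
  (A *m antidiag_mx m k) a q = \sum_(p < m | (p + q == k)%N) A a p.
Proof.
rewrite mxE [RHS]big_mkcond; apply: eq_bigr => p _; rewrite mxE.
by case: ifP; rewrite ?mulr1 ?mulr0.
Qed.

Lemma antidiag_mulmxE m k (A : 'M[algC]_m) a q :
  (antidiag_mx m k *m A) a q = \sum_(p < m | (a + p == k)%N) A p q.
Proof.
rewrite mxE [RHS]big_mkcond; apply: eq_bigr => p _; rewrite mxE.
by case: ifP; rewrite ?mul1r ?mul0r.
Qed.

Lemma mxtrace_mul_adj_antidiag m k (X : 'M[algC]_m) :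
  \tr (X *m adjmx (antidiag_mx m k)) = \sum_(a < m) \sum_(q < m | (a + q == k)%N) X a q.
Proof.
apply: eq_bigr => a _; rewrite mxE [RHS]big_mkcond; apply: eq_bigr => q _.
by rewrite adjmxE mxE; case: ifP; rewrite ?rmorph1 ?mulr1 ?rmorph0 ?mulr0.
Qed.

Lemma sum_antidiag_const m k (c : algC) :
  \sum_(a < m) \sum_(q < m | (a + q == k)%N) c = (wcount m m k)%:R * c.
Proof.
rewrite pair_big_dep /= /wcount mulr_natl -sumr_const.
by apply: eq_bigl => p; rewrite inE.
Qed.

Section AntidiagSums.
Variables (F : numDomainType) (m k : nat).

Lemma sum_antidiag_le_l (f : 'I_m -> F) : (forall p, 0 <= f p) ->
  \sum_(q < m) \sum_(p < m | (p + q == k)%N) f p <= \sum_(p < m) f p.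
Proof.
move=> f_ge0; rewrite (exchange_big_dep xpredT) //=; apply: ler_sum => p _.
by apply: sum_single_le => // q q'; apply: antidiag_single_r.
Qed.

Lemma sum_antidiag_le_r (g : 'I_m -> F) : (forall q, 0 <= g q) ->
  \sum_(q < m) \sum_(p < m | (p + q == k)%N) g q <= \sum_(q < m) g q.
Proof.
move=> g_ge0; apply: ler_sum => q _.
by apply: sum_single_le => // p p'; apply: antidiag_single_l.
Qed.

End AntidiagSums.

Definition tangent_antidiag m (PU PV : 'M[algC]_m) k : 'M[algC]_m :=
  PU *m antidiag_mx m k + antidiag_mx m k *m PV - PU *m antidiag_mx m k *m PV.

Definition tangent_entry_bound m (u v : 'I_m -> algC) k (a q : 'I_m) : algC :=
  \sum_(p < m | (p + q == k)%N) (u a + u p) / 2%:R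
  + \sum_(p < m | (a + p == k)%N) (v p + v q) / 2%:R
  + (u a + v q) / 2%:R.

Section TangentEntries.
Variables (m r k : nat) (U V : 'M[algC]_(m, r)).
Local Notation PU := (U *m adjmx U).
Local Notation PV := (V *m adjmx V).
Local Notation J := (antidiag_mx m k).
Hypotheses (U_isometry : adjmx U *m U = 1%:M) (V_isometry : adjmx V *m V = 1%:M).

Lemma norm_projmx_antidiag_projmx_le a q :
  `|(PU *m J *m PV) a q| <= (row_sqnorm U a + row_sqnorm V q) / 2%:R.
Proof.
rewrite mxE; apply: le_trans (ler_norm_sum _ _ _) _.
apply: (@le_trans _ _ (\sum_(q' < m) \sum_(p < m | (p + q' == k)%N)
    (`|PU a p| ^+ 2 + `|PV q' q| ^+ 2) / 2%:R)).
  apply: ler_sum => q' _; rewrite mulmx_antidiagE mulr_suml.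
  apply: le_trans (ler_norm_sum _ _ _) _; apply: ler_sum => p _.
  exact: normrM_le_mean_sqr.
rewrite (eq_bigr (fun q' : 'I_m => (\sum_(p < m | (p + q' == k)%N) `|PU a p| ^+ 2
    + \sum_(p < m | (p + q' == k)%N) `|PV q' q| ^+ 2) / 2%:R)); last first.
  by move=> q' _; rewrite -big_split mulr_suml.
rewrite -mulr_suml big_split /= ler_pM2r ?invr_gt0 ?ltr0n //; apply: lerD.
  rewrite -projmx_row_sqnorm //; apply: sum_antidiag_le_l => p.
  by rewrite exprn_ge0.
rewrite -(projmx_row_sqnorm V_isometry q).
under eq_bigr => q' _ do under eq_bigr => p _ do rewrite projmx_conj norm_conjC.
by apply: sum_antidiag_le_r => q'; rewrite exprn_ge0.
Qed.

Lemma norm_tangent_antidiag_le a q :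
  `|tangent_antidiag PU PV k a q|
    <= tangent_entry_bound (row_sqnorm U) (row_sqnorm V) k a q.
Proof.
have -> : tangent_antidiag PU PV k a q
    = (PU *m J) a q + (J *m PV) a q - (PU *m J *m PV) a q by rewrite !mxE.
apply: le_trans (ler_normB _ _) _; rewrite lerD ?norm_projmx_antidiag_projmx_le //.
apply: le_trans (ler_normD _ _) _; apply: lerD.
  rewrite mulmx_antidiagE; apply: le_trans (ler_norm_sum _ _ _) _.
  by apply: ler_sum => p _; apply: norm_projmx_le.
rewrite antidiag_mulmxE; apply: le_trans (ler_norm_sum _ _ _) _.
by apply: ler_sum => p _; apply: norm_projmx_le.
Qed.

End TangentEntries.

Lemma sum_tangent_entry_bound_le d m (u v : 'I_d -> 'I_m -> algC) (B : algC) k a q :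
  0 <= B ->
  (forall i, \sum_(b < d) u b i <= B) -> (forall i, \sum_(b < d) v b i <= B) ->
  \sum_(b < d) tangent_entry_bound (u b) (v b) k a q <= 3%:R * B.
Proof.
move=> B_ge0 uB vB; rewrite /tangent_entry_bound !big_split /=.
have -> : 3%:R * B = B + B + B by ring.
rewrite !lerD ?sum_mean_le // exchange_big /=; apply: sum_single_le => //.
- by move=> p p'; apply: antidiag_single_l.
- by move=> p _; apply: sum_mean_le.
- by move=> p p'; apply: antidiag_single_r.
- by move=> p _; apply: sum_mean_le.
Qed.

Definition wscale m k : algC := (sqrtC (wcount m m k)%:R)^-1.

Lemma wscale_ge0 m k : 0 <= wscale m k.
Proof. by rewrite invr_ge0 sqrtC_ge0 ler0n. Qed.

Lemma Gmat_antidiag m k : Gmat m m k = wscale m k *: antidiag_mx m k.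
Proof. by apply/matrixP => i j; rewrite !mxE; case: ifP; rewrite ?mulr1 ?mulr0. Qed.

Lemma norm_dft d (b j : 'I_d) : (0 < d)%N -> `|dft b j| = (sqrtC d%:R)^-1.
Proof.
move=> d_gt0; rewrite /dft /dft_omega normrM normfV.
rewrite [`|sqrtC _|]ger0_norm ?sqrtC_ge0 ?ler0n //.
by rewrite normrX norm_conjC normrX norm_rootC normrN1 rootC1 // !expr1n mulr1.
Qed.

Section BlockInner.
Variables (d m r : nat) (U V : 'I_d -> 'M[algC]_(m, r)).

Lemma PT_Ghat (j : 'I_d) k b :
  PT U V (Ghat m m j k) b =
  (dft b j * wscale m k) *:
    tangent_antidiag (U b *m adjmx (U b)) (V b *m adjmx (V b)) k.
Proof.
rewrite /PT /Ghat Gmat_antidiag scalerA /tangent_antidiag.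
by rewrite -!scalemxAr -!scalemxAl -scalerDr -scalerBr.
Qed.

Lemma bdinner_PT_Ghat (j alpha : 'I_d) k beta :
  bdinner (PT U V (Ghat m m j k)) (Ghat m m alpha beta) =
  \sum_(b < d) (dft b j * wscale m k) * (dft b alpha * wscale m beta)^* *
     \tr (tangent_antidiag (U b *m adjmx (U b)) (V b *m adjmx (V b)) k
          *m adjmx (antidiag_mx m beta)).
Proof.
apply: eq_bigr => b _.
rewrite PT_Ghat /Ghat Gmat_antidiag scalerA adjmxZ -scalemxAl -scalemxAr !mxtraceZ.
by rewrite mulrA.
Qed.

End BlockInner.

Section IncoherentBound.
Variables (d m r : nat) (U V : 'I_d -> 'M[algC]_(m, r)) (mu : algC).
Hypotheses (d_gt0 : (0 < d)%N) (mu_ge0 : 0 <= mu).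
Hypotheses (U_isometry : forall b, adjmx (U b) *m U b = 1%:M)
           (V_isometry : forall b, adjmx (V b) *m V b = 1%:M).
Hypotheses (U_incoherent : forall i, \sum_(b < d) row_sqnorm (U b) i <= d%:R * mu)
           (V_incoherent : forall i, \sum_(b < d) row_sqnorm (V b) i <= d%:R * mu).

Local Notation T b k beta :=
  (\tr (tangent_antidiag (U b *m adjmx (U b)) (V b *m adjmx (V b)) k
        *m adjmx (antidiag_mx m beta))).

Lemma sum_norm_trace_tangent_le k beta :
  \sum_(b < d) `|T b k beta| <= (wcount m m beta)%:R * (3%:R * (d%:R * mu)).
Proof.
rewrite -sum_antidiag_const.
apply: (@le_trans _ _ (\sum_(b < d) \sum_(a < m) \sum_(q < m | (a + q == beta)%N)
    tangent_entry_bound (row_sqnorm (U b)) (row_sqnorm (V b)) k a q)).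
  apply: ler_sum => b _; rewrite mxtrace_mul_adj_antidiag.
  apply: le_trans (ler_norm_sum _ _ _) _; apply: ler_sum => a _.
  apply: le_trans (ler_norm_sum _ _ _) _; apply: ler_sum => q _.
  exact: norm_tangent_antidiag_le.
rewrite exchange_big; apply: ler_sum => a _.
rewrite exchange_big; apply: ler_sum => q _.
by apply: sum_tangent_entry_bound_le; rewrite // mulr_ge0 ?ler0n.
Qed.

Lemma norm_bdinner_PT_Ghat_le (j alpha : 'I_d) k beta :
  `|bdinner (PT U V (Ghat m m j k)) (Ghat m m alpha beta)|
    <= wscale m k * wscale m beta * (wcount m m beta)%:R * (3%:R * mu).
Proof.
rewrite bdinner_PT_Ghat; apply: le_trans (ler_norm_sum _ _ _) _.
have coefE b : `|dft b j * wscale m k * (dft b alpha * wscale m beta)^*|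
    = d%:R^-1 * (wscale m k * wscale m beta).
  have normE (x y z w : algC) : `|x * y * (z * w)^*| = `|x| * `|y| * (`|z| * `|w|).
    by rewrite !normrM norm_conjC normrM.
  rewrite normE !norm_dft // !ger0_norm ?wscale_ge0 //.
  have -> : (d%:R : algC)^-1 = (sqrtC d%:R)^-1 ^+ 2 by rewrite exprVn sqrtCK.
  ring.
under eq_bigr => b _ do rewrite normrM coefE.
rewrite -mulr_sumr; apply: le_trans (ler_wpM2l _ (sum_norm_trace_tangent_le k beta)) _.
  by rewrite mulr_ge0 ?invr_ge0 ?ler0n ?mulr_ge0 ?wscale_ge0.
have d_neq0 : d%:R != 0 :> algC by rewrite pnatr_eq0 -lt0n.
by rewrite le_eqVlt; apply/predU1l; field.
Qed.

End IncoherentBound.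

Theorem lemma6p3 (d n r : nat) (mu0 : algC)
    (Z : 'I_d -> 'M[algC]_(half_dim n, half_dim n))
    (U V : 'I_d -> 'M[algC]_(half_dim n, r))
    (S : 'I_d -> 'M[algC]_r) :
  (0 < d)%N -> odd n ->
  (forall a : 'I_d, is_compact_svd (Z a) (U a) (S a) (V a)) ->
  avg_incoherent n mu0 U V ->
  forall (j alpha : 'I_d) (k beta : 'I_n),
    sqrtC ((wcount (half_dim n) (half_dim n) k)%:R
           / (wcount (half_dim n) (half_dim n) beta)%:R)
    * `|bdinner (PT U V (Ghat (half_dim n) (half_dim n) j k))
                (Ghat (half_dim n) (half_dim n) alpha beta)|
    <= 3%:R * mu0 * r%:R / n%:R.
Proof.
move=> d_gt0 n_odd svd [U_avg V_avg] j alpha k beta.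
have U_isometry b : adjmx (U b) *m U b = 1%:M by case: (svd b) => [[]].
have V_isometry b : adjmx (V b) *m V b = 1%:M by case: (svd b) => [[]].
set mu := mu0 * r%:R / n%:R in U_avg V_avg *.
have sum_le (W : 'I_d -> 'M[algC]_(half_dim n, r)) :
    (forall i, d%:R^-1 * \sum_(b < d) row_sqnorm (W b) i <= mu) ->
    forall i, \sum_(b < d) row_sqnorm (W b) i <= d%:R * mu.
  by move=> W_avg i; rewrite -ler_pdivrMl ?ltr0n.
have m_gt0 : (0 < half_dim n)%N by move: n_odd; case: (n).
have mu_ge0 : 0 <= mu.
  apply: le_trans (U_avg (Ordinal m_gt0)).
  by rewrite mulr_ge0 ?invr_ge0 ?ler0n // sumr_ge0 // => b _; apply: row_sqnorm_ge0.
have bound := norm_bdinner_PT_Ghat_le d_gt0 mu_ge0 U_isometry V_isometry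
  (sum_le _ U_avg) (sum_le _ V_avg) j alpha k beta.
have -> : 3%:R * mu0 * r%:R / n%:R = 3%:R * mu by rewrite /mu !mulrA.
apply: le_trans (ler_wpM2l _ bound) _.
  by rewrite sqrtC_ge0 divr_ge0 ?ler0n.
rewrite (mulrA (sqrtC _)); apply: ler_piMl; first by rewrite mulr_ge0 ?ler0n.
by apply: sqrtC_ratio_le1; rewrite ler0n.
Qed.
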